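(* Let $\mathcal{F}$ be a frame, let $C_{cut}$ be an undirected cut between $C_s$ and $C_o$ (all subsets of $\mathcal{CH}$), and let $\mathcal{B}_o\in\mathrm{lruns}_{C_o}$. Then $$J_{C_o}^{C_s}(\mathcal{B}_o)=\bigcup_{\mathcal{B}_c\in J_{C_o}^{C_{cut}}(\mathcal{B}_o)} J_{C_{cut}}^{C_s}(\mathcal{B}_c).$$
   Context: A frame $\mathcal{F}$ consists of pairwise disjoint sets $\mathcal{LO}$ (locations), $\mathcal{CH}$ (channels), $\mathcal{D}$ (data). Each channel $c$ either has both a sender $\mathrm{sender}(c)$ and recipient $\mathrm{recipient}(c)$ in $\mathcal{LO}$ (possibly equal), or neither; $\mathrm{chans}(\ell)=\{c:\mathrm{sender}(c)=\ell\text{ or }\mathrm{recipient}(c)=\ell\}$. Each location $\ell$ has a prefix-closed set $\mathrm{traces}(\ell)$ of finite or infinite sequences of labels $(c,v)$, $c\in\mathrm{chans}(\ell)$, $v\in\mathcal{D}$. Events come from a set $E$ with $\mathrm{chan}:E\to\mathcal{CH}$, $\mathrm{msg}:E\to\mathcal{D}$. A system of events $(B,\preceq)$ has $B\subseteq E$, $\preceq$ a partial order with finitely many predecessors per event; it is an execution ($\in\mathrm{exec}(\mathcal{F})$) iff for each location $\ell$ the events whose channel has $\ell$ as sender or recipient are linearly ordered and, as a sequence of labels $(\mathrm{chan}(e),\mathrm{msg}(e))$, lie in $\mathrm{traces}(\ell)$. $\mathcal{B}|_C$ keeps events with channel in $C$ with the restricted order; $\mathrm{lruns}_C=\{\mathcal{A}|_C:\mathcal{A}\in\mathrm{exec}(\mathcal{F})\}$;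 $J_C^{C'}(\mathcal{B})=\{\mathcal{A}|_{C'}:\mathcal{A}\in\mathrm{exec}(\mathcal{F}),\mathcal{A}|_C=\mathcal{B}\}$. An undirected path is a sequence of locations $\ell_0,\dots,\ell_n$ with channels $c_1,\dots,c_n$, each $c_k$ having endpoints $\ell_{k-1},\ell_k$ in some direction (the path traverses the $c_k$). $C_{cut}$ is an undirected cut between $C_s$ and $C_o$ iff $C_s,C_{cut},C_o$ are pairwise disjoint and every undirected path from an endpoint location of a channel in $C_o$ to an endpoint location of a channel in $C_s$ traverses some channel in $C_{cut}$. *)

From Stdlib Require Import List.
Import ListNotations.
Set Implicit Arguments.

(* A (finite or infinite) sequence: a function nat -> option X that, once it
   returns None, returns None forever.  Finite sequences end with None. *)
Definition is_seq {X : Type} (t : nat -> option X) : Prop :=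
  forall n, t n = None -> t (S n) = None.

Definition truncate {X : Type} (t : nat -> option X) (n : nat) : nat -> option X :=
  fun k => if Nat.ltb k n then t k else None.

(* The three sets LO, CH, D are separate types (hence pairwise
   disjoint).  [endpoints c = Some (s, r)] means sender(c) = s and
   recipient(c) = r; [None] means c has neither a sender nor a recipient. *)
Record frame := {
  LO : Type;
  CH : Type;
  D  : Type;
  endpoints : CH -> option (LO * LO);
  traces : LO -> (nat -> option (CH * D)) -> Prop;
  traces_seq : forall l t, traces l t -> is_seq t;
  traces_chans : forall l t n c v, traces l t -> t n = Some (c, v) ->
      exists s r, endpoints c = Some (s, r) /\ (s = l \/ r = l);
  traces_prefix : forall l t n, traces l t -> traces l (truncate t n);
  E : Type;
  chan : E -> CH;
  msg : E -> D
}.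

Section Sys.
Variable F : frame.

Definition sender_of (c : CH F) (l : LO F) : Prop :=
  exists r, endpoints F c = Some (l, r).
Definition recipient_of (c : CH F) (l : LO F) : Prop :=
  exists s, endpoints F c = Some (s, l).
Definition at_loc (c : CH F) (l : LO F) : Prop := sender_of c l \/ recipient_of c l.

(* A candidate system of events: a subset B of E and a relation on E
   (only its restriction to B is relevant). *)
Record sysev := { mem : E F -> Prop; le : E F -> E F -> Prop }.

Definition is_system (B : sysev) : Prop :=
  (forall e, mem B e -> le B e e) /\
  (forall e1 e2, mem B e1 -> mem B e2 -> le B e1 e2 -> le B e2 e1 -> e1 = e2) /\
  (forall e1 e2 e3, mem B e1 -> mem B e2 -> mem B e3 ->
      le B e1 e2 -> le B e2 e3 -> le B e1 e3) /\
  (forall e, mem B e -> exists l : list (E F),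
      forall e', mem B e' -> le B e' e -> In e' l).

Definition sys_eq (A B : sysev) : Prop :=
  (forall e, mem A e <-> mem B e) /\
  (forall e1 e2, mem A e1 -> mem A e2 -> (le A e1 e2 <-> le B e1 e2)).

Definition label (e : E F) : CH F * D F := (chan F e, msg F e).

Definition loc_ev (B : sysev) (l : LO F) (e : E F) : Prop :=
  mem B e /\ at_loc (chan F e) l.

(* The order-listing is an enumeration f : nat -> option E of the events at
   l, strictly increasing and exhaustive. *)
Definition is_exec (B : sysev) : Prop :=
  is_system B /\
  forall l : LO F,
    (forall e1 e2, loc_ev B l e1 -> loc_ev B l e2 -> le B e1 e2 \/ le B e2 e1) /\
    exists (f : nat -> option (E F)) (t : nat -> option (CH F * D F)),
      is_seq f /\
      (forall n e, f n = Some e -> loc_ev B l e) /\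
      (forall e, loc_ev B l e -> exists n, f n = Some e) /\
      (forall i j e1 e2, i < j -> f i = Some e1 -> f j = Some e2 ->
          le B e1 e2 /\ e1 <> e2) /\
      traces F l t /\
      (forall n, t n = option_map label (f n)).

Definition restrict (C : CH F -> Prop) (B : sysev) : sysev :=
  {| mem := fun e => mem B e /\ C (chan F e);
     le := fun e1 e2 => (mem B e1 /\ C (chan F e1)) /\
                        (mem B e2 /\ C (chan F e2)) /\ le B e1 e2 |}.

Definition lruns (C : CH F -> Prop) (B : sysev) : Prop :=
  exists A, is_exec A /\ sys_eq (restrict C A) B.

Definition J (C C' : CH F -> Prop) (B X : sysev) : Prop :=
  exists A, is_exec A /\ sys_eq (restrict C A) B /\ sys_eq (restrict C' A) X.

Inductive upath : LO F -> list (CH F) -> LO F -> Prop :=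
| upath_nil : forall l, upath l [] l
| upath_cons : forall l m l' c cs,
    ((endpoints F c = Some (l, m)) \/ (endpoints F c = Some (m, l))) ->
    upath m cs l' -> upath l (c :: cs) l'.

Definition undirected_cut (Cs Ccut Co : CH F -> Prop) : Prop :=
  (forall c, ~ (Cs c /\ Ccut c)) /\
  (forall c, ~ (Cs c /\ Co c)) /\
  (forall c, ~ (Ccut c /\ Co c)) /\
  (forall co cs l0 ln p, Co co -> Cs cs -> at_loc co l0 -> at_loc cs ln ->
      upath l0 p ln -> exists c, In c p /\ Ccut c).

End Sys.
Arguments undirected_cut : clear implicits.
Arguments lruns : clear implicits.
Arguments J : clear implicits.

(* Given two executions A1, A2 that agree on the cut channels, split the
   locations into those reachable from an endpoint of a [Co]-channel by an
   undirected path avoiding the cut, and all others.  Glue a new execution that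
   behaves like A1 at the first kind of location and like A2 at the second: its
   order is "x <= k in one execution, k <= y in the other", the middle event k
   lying on both sides, hence on the cut where A1 and A2 agree.  Every location
   sees a single side, so local traces come from A1 or A2; [Co]-channels lie on
   the A1 side and, by the cut property, [Cs]-channels on the A2 side. *)
From Stdlib Require Import List Bool Classical.
Import ListNotations.

Section Systems.
Variable F : frame.

Lemma sys_eq_refl (A : sysev F) : sys_eq A A.
Proof. split; intros; tauto. Qed.

Lemma sys_eq_sym (A B : sysev F) : sys_eq A B -> sys_eq B A.
Proof.
  intros [Hmem Hle]; split; intros.
  - symmetry; apply Hmem.
  - symmetry; apply Hle; apply Hmem; assumption.
Qed.

Lemma sys_eq_trans (A B C : sysev F) : sys_eq A B -> sys_eq B C -> sys_eq A C.
Proof.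
  intros [Hmem1 Hle1] [Hmem2 Hle2]; split; intros.
  - rewrite Hmem1; apply Hmem2.
  - rewrite Hle1 by assumption; apply Hle2; apply Hmem1; assumption.
Qed.

Lemma restrict_eq_mem (C : CH F -> Prop) (A B : sysev F) e :
  sys_eq (restrict C A) (restrict C B) -> C (chan F e) -> mem A e -> mem B e.
Proof. intros [Hmem _] He HA; apply (Hmem e); split; assumption. Qed.

Lemma restrict_eq_le (C : CH F -> Prop) (A B : sysev F) x y :
  sys_eq (restrict C A) (restrict C B) -> C (chan F x) -> C (chan F y) ->
  mem A x -> mem A y -> le A x y -> le B x y.
Proof.
  intros [_ Hle] Cx Cy Ax Ay Axy.
  apply (Hle x y (conj Ax Cx) (conj Ay Cy)); simpl; auto.
Qed.

Section System.
Variable B : sysev F.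
Hypothesis B_system : is_system B.

Lemma system_refl x : mem B x -> le B x x.
Proof. apply (proj1 B_system). Qed.

Lemma system_antisym x y : mem B x -> mem B y -> le B x y -> le B y x -> x = y.
Proof. apply (proj1 (proj2 B_system)). Qed.

Lemma system_trans x y z :
  mem B x -> mem B y -> mem B z -> le B x y -> le B y z -> le B x z.
Proof. apply (proj1 (proj2 (proj2 B_system))). Qed.

Lemma system_preds_of_list (L : list (E F)) :
  exists L', forall c x, In c L -> mem B c -> mem B x -> le B x c -> In x L'.
Proof.
  induction L as [|a L [L' HL']].
  - exists []; intros c x [].
  - destruct (classic (mem B a)) as [Ha|Ha].
    + destruct (proj2 (proj2 (proj2 B_system)) a Ha) as [La HLa].
      exists (La ++ L'); intros c x [<-|Hc] Hmc Hmx Hxc; apply in_or_app; eauto.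
    + exists L'; intros c x [<-|Hc] Hmc Hmx Hxc; [contradiction|eauto].
Qed.

End System.

(* [is_exec B] unfolds to [is_system B /\ forall l, exec_at B l]. *)
Definition exec_at (B : sysev F) (l : LO F) : Prop :=
  (forall e1 e2, loc_ev B l e1 -> loc_ev B l e2 -> le B e1 e2 \/ le B e2 e1) /\
  exists (f : nat -> option (E F)) (t : nat -> option (CH F * D F)),
    is_seq f /\
    (forall n e, f n = Some e -> loc_ev B l e) /\
    (forall e, loc_ev B l e -> exists n, f n = Some e) /\
    (forall i j e1 e2, i < j -> f i = Some e1 -> f j = Some e2 ->
        le B e1 e2 /\ e1 <> e2) /\
    traces F l t /\
    (forall n, t n = option_map (label F) (f n)).

Lemma exec_at_ext (A B : sysev F) l :
  exec_at A l ->
  (forall e, loc_ev B l e <-> loc_ev A l e) ->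
  (forall x y, loc_ev A l x -> loc_ev A l y -> le A x y -> le B x y) ->
  exec_at B l.
Proof.
  intros [Hlin (f & t & Hseq & Hf & Hall & Hinc & Htr & Hlab)] Hev Hle.
  split.
  - intros x y Hx%Hev Hy%Hev. destruct (Hlin x y Hx Hy); [left|right]; auto.
  - exists f, t; split; [|split; [|split; [|split]]]; auto.
    + intros n e Hn; apply Hev; eauto.
    + intros e He%Hev; auto.
    + intros i j x y Hij Hi Hj. destruct (Hinc i j x y Hij Hi Hj) as [Hxy Hne].
      split; [apply Hle|]; eauto.
Qed.

Section Glue.
Variables (K : CH F -> Prop) (side : bool -> CH F -> Prop) (A : bool -> sysev F).
Hypothesis side_both : forall c, side true c -> side false c -> K c.
Hypothesis A_system : forall b, is_system (A b).
Hypothesis A_agree : forall b b', sys_eq (restrict K (A b)) (restrict K (A b')).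

Definition on_side b e := side b (chan F e) /\ mem (A b) e.
Definition step b x y := on_side b x /\ on_side b y /\ le (A b) x y.

Definition glue : sysev F :=
  {| mem := fun e => exists b, on_side b e;
     le := fun x y => exists b b' k, step b x k /\ step b' k y |}.

Lemma side_interface b b' c : b <> b' -> side b c -> side b' c -> K c.
Proof. destruct b, b'; intros; auto; congruence. Qed.

Lemma on_side_transfer b b' e : on_side b e -> side b' (chan F e) -> on_side b' e.
Proof.
  intros [Hs Hm] Hs'; split; [assumption|].
  destruct (bool_dec b b') as [<-|Hne]; [assumption|].
  eapply restrict_eq_mem; [apply A_agree|eapply side_interface|]; eauto.
Qed.

Lemma step_transfer b b' x y :
  step b x y -> side b' (chan F x) -> side b' (chan F y) -> step b' x y.
Proof.
  intros (Hx & Hy & Hxy) Hx' Hy'.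
  split; [|split]; try (eapply on_side_transfer; eassumption).
  destruct (bool_dec b b') as [<-|Hne]; [assumption|].
  eapply restrict_eq_le; [apply A_agree| | |apply Hx|apply Hy|exact Hxy];
    eapply side_interface; eauto; [apply Hx|apply Hy].
Qed.

Lemma step_refl b x : on_side b x -> step b x x.
Proof. intros Hx; split; [|split]; auto; apply system_refl, Hx; auto. Qed.

Lemma step_trans b x y z : step b x y -> step b y z -> step b x z.
Proof.
  intros (Hx & Hy & Hxy) (_ & Hz & Hyz); split; [|split]; auto.
  apply system_trans with y; auto; [apply Hx|apply Hy|apply Hz].
Qed.

(* Of three sides, two coincide; if the outer two do, the middle step crosses
   the interface twice and can be transferred to that side. *)
Lemma step_merge a c d x p q z :
  step a x p -> step c p q -> step d q z -> exists m, step a x m /\ step d m z.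
Proof.
  intros Hxp Hpq Hqz.
  assert (Hsides : a = c \/ a = d \/ c = d) by (destruct a, c, d; auto).
  destruct Hsides as [<-|[<-|<-]].
  - exists q; split; [eapply step_trans|]; eauto.
  - exists q; split; [|exact Hqz]. apply step_trans with p; [exact Hxp|].
    apply step_transfer with c; [exact Hpq|apply Hxp|apply Hqz].
  - exists p; split; [|eapply step_trans]; eauto.
Qed.

Lemma step_glue_le b x y : step b x y -> le glue x y.
Proof. intros Hxy; exists b, b, x; split; [apply step_refl, Hxy|exact Hxy]. Qed.

Lemma glue_le_step b x y : le glue x y -> on_side b x -> on_side b y -> step b x y.
Proof.
  intros (c & c' & k & Hxk & Hky) Hx Hy.
  destruct (step_merge _ _ _ _ _ _ _ (step_refl _ _ Hx) Hxk Hky) as (m & Hxm & Hmy).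
  destruct (step_merge _ _ _ _ _ _ _ Hxm Hmy (step_refl _ _ Hy)) as (m' & Hxm' & Hm'y).
  eapply step_trans; eassumption.
Qed.

Lemma glue_trans x y z : le glue x y -> le glue y z -> le glue x z.
Proof.
  intros (b1 & b2 & k1 & H1 & H2) (b3 & b4 & k2 & H3 & H4).
  destruct (step_merge _ _ _ _ _ _ _ H1 H2 H3) as (m & Hxm & Hmk).
  destruct (step_merge _ _ _ _ _ _ _ Hxm Hmk H4) as (m' & Hxm' & Hm'z).
  exists b1, b4, m'; auto.
Qed.

(* If x <= k on side b and k <= y on side b', then y <= x forces k = x. *)
Lemma glue_common_side x y :
  le glue x y -> le glue y x -> exists b, on_side b x /\ on_side b y.
Proof.
  intros Hxy Hyx. destruct Hxy as (b & b' & k & Hxk & Hky).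
  assert (Hkx : step b k x).
  { apply glue_le_step; [|apply Hxk|apply Hxk].
    apply glue_trans with y; [eapply step_glue_le|]; eassumption. }
  assert (Hk : x = k).
  { apply (system_antisym _ (A_system b)); [apply Hxk|apply Hxk|apply Hxk|apply Hkx]. }
  subst k; exists b'; split; apply Hky.
Qed.

Lemma glue_fin_preds y : exists L, forall x, le glue x y -> In x L.
Proof.
  assert (Hpreds : forall L, exists L', forall b c x,
             In c L -> mem (A b) c -> mem (A b) x -> le (A b) x c -> In x L').
  { intros L.
    destruct (system_preds_of_list _ (A_system true) L) as [Lt Ht].
    destruct (system_preds_of_list _ (A_system false) L) as [Lf Hf].
    exists (Lt ++ Lf); intros [] c x Hc Hmc Hmx Hxc; apply in_or_app; eauto. }
  destruct (Hpreds [y]) as [L1 H1]; destruct (Hpreds L1) as [L2 H2].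
  exists L2; intros x (b & b' & k & (Hx & Hk & Hxk) & (Hk' & Hy & Hky)).
  apply (H2 b k); [apply (H1 b' y)|apply Hk|apply Hx|exact Hxk];
    [left; reflexivity|apply Hy|apply Hk'|exact Hky].
Qed.

Lemma glue_system : is_system glue.
Proof.
  split; [|split; [|split]].
  - intros e [b He]; apply step_glue_le with b, step_refl, He.
  - intros x y _ _ Hxy Hyx.
    destruct (glue_common_side x y Hxy Hyx) as (b & Hx & Hy).
    apply (system_antisym _ (A_system b)); [apply Hx|apply Hy| |];
      apply (glue_le_step b); assumption.
  - intros x y z _ _ _; apply glue_trans.
  - intros e _; destruct (glue_fin_preds e) as [L HL]; exists L; auto.
Qed.

Lemma restrict_glue b (C : CH F -> Prop) :
  (forall c, C c -> side b c) -> sys_eq (restrict C glue) (restrict C (A b)).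
Proof.
  intros HC.
  assert (Hmem : forall e, C (chan F e) -> mem glue e <-> on_side b e).
  { intros e Ce; split; [intros [b' He]; eapply on_side_transfer; eauto|exists b; auto]. }
  split; simpl.
  - intros e; split; intros [He Ce]; split; try apply Hmem; auto; split; auto.
  - intros x y [Hx Cx] [Hy Cy].
    apply Hmem in Hx; [|exact Cx]; apply Hmem in Hy; [|exact Cy].
    split; intros (_ & _ & Hxy).
    + split; [|split]; [split; [apply Hx|exact Cx]|split; [apply Hy|exact Cy]|].
      apply glue_le_step; assumption.
    + split; [|split];
        [split; [exists b; exact Hx|exact Cx]|split; [exists b; exact Hy|exact Cy]|].
      apply step_glue_le with b; split; auto.
Qed.

Section Executions.
Hypothesis A_exec : forall b, is_exec (A b).
Hypothesis side_at_loc : forall l, exists b, forall c, at_loc F c l -> side b c.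

Lemma loc_ev_glue b l e :
  (forall c, at_loc F c l -> side b c) -> loc_ev glue l e <-> loc_ev (A b) l e.
Proof.
  intros Hl; split.
  - intros [[b' He] Hat]; split; [|exact Hat].
    apply (on_side_transfer b' b e He (Hl _ Hat)).
  - intros [He Hat]; split; [exists b; split; auto|exact Hat].
Qed.

Lemma glue_exec : is_exec glue.
Proof.
  split; [exact glue_system|]; intros l.
  destruct (side_at_loc l) as [b Hl].
  apply (exec_at_ext (A b));
    [exact (proj2 (A_exec b) l)|intros e; apply loc_ev_glue, Hl|].
  intros x y [Ax Hx] [Ay Hy] Hxy.
  apply step_glue_le with b; split; [|split]; [split|split|]; auto.
Qed.

End Executions.
End Glue.
End Systems.

Section Cut.
Variables (F : frame) (Ccut Co : CH F -> Prop).

Lemma upath_snoc a p b c d :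
  upath F a p b ->
  endpoints F c = Some (b, d) \/ endpoints F c = Some (d, b) ->
  upath F a (p ++ [c]) d.
Proof.
  intros Hp Hc; induction Hp; simpl.
  - econstructor; [exact Hc|constructor].
  - econstructor; eauto.
Qed.

Lemma at_loc_cases c l m : at_loc F c l -> at_loc F c m ->
  l = m \/ endpoints F c = Some (l, m) \/ endpoints F c = Some (m, l).
Proof.
  unfold at_loc, sender_of, recipient_of.
  intros [[r H]|[s H]] [[r' H']|[s' H']]; rewrite H in H';
    injection H'; intros; subst; auto.
Qed.

Definition reachable_avoiding_cut (l : LO F) : Prop :=
  exists co l0 p,
    Co co /\ at_loc F co l0 /\ upath F l0 p l /\ forall c, In c p -> ~ Ccut c.

Definition near_Co (c : CH F) : Prop :=
  Co c \/ exists l, at_loc F c l /\ reachable_avoiding_cut l.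

Definition cut_side (b : bool) (c : CH F) : Prop :=
  Ccut c \/ if b then near_Co c else ~ near_Co c.

Lemma cut_side_both c : cut_side true c -> cut_side false c -> Ccut c.
Proof. unfold cut_side; tauto. Qed.

Lemma reachable_avoiding_cut_step c l m :
  reachable_avoiding_cut m -> ~ Ccut c -> at_loc F c m -> at_loc F c l ->
  reachable_avoiding_cut l.
Proof.
  intros (co & l0 & p & Hco & H0 & Hp & Hnc) Hc Hm Hl.
  destruct (at_loc_cases c m l Hm Hl) as [<-|Hedge]; [exists co, l0, p; auto|].
  exists co, l0, (p ++ [c]); split; [|split; [|split]]; auto.
  - apply upath_snoc with m; assumption.
  - intros c' [Hc'|[<-|[]]]%in_app_or; auto.
Qed.

Lemma cut_side_at_loc l : exists b, forall c, at_loc F c l -> cut_side b c.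
Proof.
  destruct (classic (reachable_avoiding_cut l)) as [Hr|Hr]; [exists true|exists false];
    intros c Hc; (destruct (classic (Ccut c)) as [Hcut|Hcut]; [left; exact Hcut|right]).
  - right; exists l; auto.
  - intros [Hco|(m & Hm & Hrm)]; apply Hr.
    + exists c, l, [].
      split; [exact Hco|split; [exact Hc|split; [constructor|intros ? []]]].
    + eapply reachable_avoiding_cut_step; eauto.
Qed.

Lemma Co_cut_side c : Co c -> cut_side true c.
Proof. right; left; assumption. Qed.

Lemma Cs_cut_side (Cs : CH F -> Prop) c :
  undirected_cut F Cs Ccut Co -> Cs c -> cut_side false c.
Proof.
  intros (_ & Hso & _ & Hpath) Hc; right.
  intros [Hco|(l & Hl & co & l0 & p & Hco & H0 & Hp & Hnc)]; [apply (Hso c); auto|].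
  destruct (Hpath co c l0 l p Hco Hc H0 Hl Hp) as (c' & Hin & Hc').
  exact (Hnc c' Hin Hc').
Qed.

End Cut.

Theorem lemma5 (F : frame) (Cs Ccut Co : CH F -> Prop) (Bo : sysev F) :
  undirected_cut F Cs Ccut Co ->
  lruns F Co Bo ->
  forall X : sysev F,
    J F Co Cs Bo X <-> exists Bc : sysev F, J F Co Ccut Bo Bc /\ J F Ccut Cs Bc X.
Proof.
  intros Hcut _ X; split.
  - intros (A & HA & Ho & Hs).
    exists (restrict Ccut A); split; exists A; auto using sys_eq_refl.
  - intros (Bc & (A1 & HA1 & H1o & H1c) & (A2 & HA2 & H2c & H2s)).
    pose (A := fun b : bool => if b then A1 else A2).
    assert (HA : forall b, is_exec (A b)) by (intros []; assumption).
    assert (HA_sys : forall b, is_system (A b)) by (intros b; apply HA).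
    assert (Hagree : forall b b', sys_eq (restrict Ccut (A b)) (restrict Ccut (A b'))).
    { assert (H12 : sys_eq (restrict Ccut A1) (restrict Ccut A2))
        by (apply sys_eq_trans with Bc; [|apply sys_eq_sym]; assumption).
      intros [] []; simpl; auto using sys_eq_refl, sys_eq_sym. }
    pose proof (cut_side_both F Ccut Co) as Hboth.
    exists (glue F (cut_side F Ccut Co) A); split; [|split].
    + exact (glue_exec F _ _ _ Hboth HA_sys Hagree HA (cut_side_at_loc F Ccut Co)).
    + apply sys_eq_trans with (restrict Co A1); [|exact H1o].
      exact (restrict_glue F _ _ _ Hboth HA_sys Hagree true Co (Co_cut_side F Ccut Co)).
    + apply sys_eq_trans with (restrict Cs A2); [|exact H2s].
      exact (restrict_glue F _ _ _ Hboth HA_sys Hagree false Cs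
               (fun c => Cs_cut_side F Ccut Co Cs c Hcut)).
Qed.
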